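(* Let $c>1$, let $m=m_1\cdots m_c\in S_c$, and let $K$ be the set partition of $S_c$ whose only part with more than one element is the set of cyclic shifts $\{m_am_{a+1}\cdots m_cm_1\cdots m_{a-1}:1\le a\le c\}$. Let $p=1\rightharpoonup m$ and $q=2\rightharpoonup m$, both in $S_{c+1}$. Then every non-avoider in $S_{c+1}$ is $K$-equivalent to $p$ or to $q$.
   Context: Permutations are written in one-line notation as words. For a word $w$ and positive integer $i$, $i\rightharpoonup w$ is the word obtained by increasing by $1$ each letter of $w$ that is $\ge i$ and then prepending $i$. The order permutation (standardization) of a word $u$ of distinct positive integers of length $\ell$ is the unique $\pi\in S_\ell$ with $\pi_i<\pi_j$ iff $u_i<u_j$. The $K$-equivalence on $S_n$ is generated by declaring $\phi\equiv\psi$ whenever $\phi=aub$, $\psi=avb$ for words $a,b,u,v$ with $u,v$ of length $c$ whose order permutations lie in the same part of $K$. A hit is a contiguous subword of length $c$ whose order permutation is a cyclic shift of $m$; a non-avoider is a permutation containing a hit. *)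

(* Permutations are words (seq nat) in one-line notation. *)
From Stdlib Require Export Relations.Relation_Operators.
From mathcomp Require Import all_boot.
Set Implicit Arguments. Unset Strict Implicit. Unset Printing Implicit Defensive.

Definition is_perm (n : nat) (w : seq nat) : Prop := perm_eq w (iota 1 n).

(* i ⇀ w : increase each letter >= i by one, then prepend i *)
Definition prepend (i : nat) (w : seq nat) : seq nat :=
  i :: [seq (if i <= x then x.+1 else x) | x <- w].

Definition std (u : seq nat) : seq nat :=
  [seq (count (fun y => y < x) u).+1 | x <- u].

Definition is_cshift (m w : seq nat) : Prop :=
  exists2 a, a < size m & w = rot a m.

(* u and v (elements of S_c) lie in the same part of K: equal, or both
   cyclic shifts of m *)
Definition sameK (m u v : seq nat) : Prop :=
  u = v \/ (is_cshift m u /\ is_cshift m v).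

Definition Kstep (m : seq nat) (n : nat) (phi psi : seq nat) : Prop :=
  is_perm n phi /\ is_perm n psi /\
  exists a b u v : seq nat,
    [/\ phi = a ++ u ++ b, psi = a ++ v ++ b,
        size u = size m, size v = size m & sameK m (std u) (std v)].

Definition Kequiv (m : seq nat) (n : nat) : seq nat -> seq nat -> Prop :=
  clos_refl_sym_trans (seq nat) (Kstep m n).

Definition nonavoider (m phi : seq nat) : Prop :=
  exists a u b : seq nat,
    [/\ phi = a ++ u ++ b, size u = size m & is_cshift m (std u)].

From mathcomp Require Import all_boot.
From mathcomp Require Import zify.

Set Implicit Arguments.
Unset Strict Implicit.
Unset Printing Implicit Defensive.

(* Write s ↼ z for the mirror image of z ⇀ s (append z, bumping the letters
   >= z).  A word of length c + 1 containing a hit is y ⇀ s or s ↼ z for a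
   cyclic shift s of m, and since all cyclic shifts of m lie in one part of K
   it is K-equivalent to y ⇀ m, resp. m ↼ z.  If k t is the cyclic shift of m
   starting with k, then y ⇀ (t k) and (k t) ↼ z are the same word whenever
   {y, z} = {k, k + 1}; hence y ⇀ m and m ↼ z are K-equivalent for such pairs,
   and going through m ↼ (y + 1) shows y ⇀ m ≡ (y + 2) ⇀ m.  So y ⇀ m is
   K-equivalent to 1 ⇀ m or 2 ⇀ m according to the parity of y. *)

Definition postpend (z : nat) (w : seq nat) : seq nat :=
  rcons [seq bump z x | x <- w] z.

Lemma prependE i w : prepend i w = i :: [seq bump i x | x <- w].
Proof. by congr (_ :: _); apply: eq_map => x; rewrite /bump; case: leqP. Qed.

Lemma bump_diag k : bump k k = k.+1.
Proof. by rewrite /bump leqnn. Qed.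

Lemma bump_succ k : bump k.+1 k = k.
Proof. by rewrite /bump ltnn. Qed.

Lemma ltn_bump2 h i j : (bump h i < bump h j) = (i < j).
Proof. by rewrite !ltnNge leq_bump2. Qed.

Lemma count_lt_iota x a n : count (fun y => y < x) (iota a n) = minn n (x - a).
Proof. by elim: n a => [|n IHn] a /=; [lia | rewrite IHn; case: ltnP; lia]. Qed.

Lemma std_mono (f : nat -> nat) s :
  {mono f : x y / x < y} -> std [seq f x | x <- s] = std s.
Proof.
move=> f_mono; rewrite /std -map_comp; apply: eq_map => x /=.
by rewrite count_map; congr _.+1; apply: eq_count => y /=; rewrite f_mono.
Qed.

Lemma std_is_perm n s : is_perm n s -> std s = s.
Proof.
move=> s_perm; apply: map_id_in => x xs; rewrite (permP s_perm) count_lt_iota.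
by move: xs; rewrite (perm_mem s_perm) mem_iota; lia.
Qed.

Lemma is_perm_prepend n y s :
  is_perm n s -> 0 < y <= n.+1 -> is_perm n.+1 (prepend y s).
Proof.
move=> s_perm y_range; rewrite prependE; apply: uniq_perm; last 1 first.
- move=> x; rewrite in_cons mem_iota.
  have [-> | x_neq_y] := eqVneq x y; first by rewrite y_range.
  rewrite -(unbumpK x_neq_y) (mem_map (can_inj (bumpK y))) (perm_mem s_perm).
  by rewrite mem_iota /bump /unbump; case: (ltnP y x); case: leqP; lia.
- rewrite /= (map_inj_uniq (can_inj (bumpK y))) (perm_uniq s_perm) iota_uniq.
  by rewrite andbT; apply/mapP => -[x _ /eqP]; rewrite (negbTE (neq_bump y x)).
- exact: iota_uniq.
Qed.

Lemma is_perm_postpend n z s :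
  is_perm n s -> 0 < z <= n.+1 -> is_perm n.+1 (postpend z s).
Proof.
by move=> s_perm z_range; rewrite /is_perm perm_rcons -prependE; apply: is_perm_prepend.
Qed.

Lemma cshift_size m s : is_cshift m s -> size s = size m.
Proof. by case=> a _ ->; rewrite size_rot. Qed.

Lemma cshift_self m s : is_cshift m s -> is_cshift m m.
Proof. by case=> a a_lt _; exists 0; rewrite ?rot0 // (leq_ltn_trans _ a_lt). Qed.

Lemma cshift_rot m k s : is_cshift m s -> is_cshift m (rot k s).
Proof.
case=> a a_lt ->; rewrite rot_rot_add.
have := leq_rot_add a k m; rewrite leq_eqVlt => /orP[/eqP -> | lt_add].
- by rewrite rot_size; apply: (@cshift_self _ (rot a m)); exists a.
- by exists (rot_add m a k).
Qed.

Lemma nonavoider_cases m phi : size phi = (size m).+1 -> nonavoider m phi ->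
  (exists y u, phi = y :: u /\ is_cshift m (std u)) \/
  (exists u z, phi = rcons u z /\ is_cshift m (std u)).
Proof.
move=> + [a [u [b [phi_eq size_u hit_u]]]]; rewrite {}phi_eq !size_cat size_u.
case: a => [|y [|? ?]]; case: b => [|z [|? ?]] //= size_ab; try lia.
- by right; exists u, z; rewrite cats1.
- by left; exists y, u; rewrite cats0.
Qed.

Lemma Kequiv_hits m n a b u v :
  is_perm n (a ++ u ++ b) -> is_perm n (a ++ v ++ b) ->
  is_cshift m (std u) -> is_cshift m (std v) ->
  Kequiv m n (a ++ u ++ b) (a ++ v ++ b).
Proof.
move=> phi_perm psi_perm hit_u hit_v; apply: rst_step; do 2!split=> //.
exists a, b, u, v; split=> //; last by right.
- by rewrite -(cshift_size hit_u) size_map.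
- by rewrite -(cshift_size hit_v) size_map.
Qed.

(* bump y k = z and bump z k = y force {y, z} = {k, k + 1}, and bump y and
   bump z only differ at k. *)
Lemma prepend_rcons_postpend y z k t :
  k \notin t -> bump y k = z -> bump z k = y ->
  prepend y (rcons t k) = postpend z (k :: t).
Proof.
move=> k_t yk_z zk_y; rewrite prependE /postpend map_rcons /= yk_z zk_y.
congr (_ :: rcons _ _); apply/eq_in_map => j j_t.
have j_neq_k : j != k by apply: contraNneq k_t => <-.
move: yk_z zk_y j_neq_k; rewrite /bump.
by case: (leqP y k); case: (leqP z k); case: (leqP y j); case: (leqP z j); lia.
Qed.

Section CyclicPart.

Variable m : seq nat.
Hypothesis m_perm : is_perm (size m) m.
Local Notation c := (size m).

Lemma mem_m x : (x \in m) = (0 < x <= c).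
Proof. by rewrite (perm_mem m_perm) mem_iota; lia. Qed.

Lemma cshift_is_perm s : is_cshift m s -> is_perm c s.
Proof. by case=> a _ ->; rewrite /is_perm perm_rot. Qed.

Lemma std_bump_cshift y s : is_cshift m s -> std [seq bump y x | x <- s] = s.
Proof.
move=> s_shift; rewrite std_mono; last exact: ltn_bump2.
exact: std_is_perm (cshift_is_perm s_shift).
Qed.

Lemma Kequiv_prepend_hit y u : is_perm c.+1 (y :: u) -> is_cshift m (std u) ->
  Kequiv m c.+1 (y :: u) (prepend y m).
Proof.
move=> phi_perm hit_u.
have m_shift := cshift_self hit_u.
have y_range : 0 < y <= c.+1.
  by move: (perm_mem phi_perm y); rewrite mem_head mem_iota; lia.
have := Kequiv_hits (a := [:: y]) (b := [::]) (u := u) (v := [seq bump y x | x <- m]).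
rewrite /= !cats0 prependE; apply=> //; first by rewrite -prependE; apply: is_perm_prepend.
by rewrite std_bump_cshift.
Qed.

Lemma Kequiv_postpend_hit u z : is_perm c.+1 (rcons u z) -> is_cshift m (std u) ->
  Kequiv m c.+1 (rcons u z) (postpend z m).
Proof.
move=> phi_perm hit_u.
have m_shift := cshift_self hit_u.
have z_range : 0 < z <= c.+1.
  by move: (perm_mem phi_perm z); rewrite mem_rcons mem_head mem_iota; lia.
have := Kequiv_hits (a := [::]) (b := [:: z]) (u := u) (v := [seq bump z x | x <- m]).
rewrite /= !cats1; apply=> //; first by rewrite -/(postpend z m); apply: is_perm_postpend.
by rewrite std_bump_cshift.
Qed.

Lemma Kequiv_prepend_cshift y s : is_cshift m s -> 0 < y <= c.+1 ->
  Kequiv m c.+1 (prepend y s) (prepend y m).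
Proof.
move=> s_shift y_range; rewrite [prepend y s]prependE.
apply: Kequiv_prepend_hit; last by rewrite std_bump_cshift.
by rewrite -prependE; apply: is_perm_prepend => //; apply: cshift_is_perm.
Qed.

Lemma Kequiv_postpend_cshift z s : is_cshift m s -> 0 < z <= c.+1 ->
  Kequiv m c.+1 (postpend z s) (postpend z m).
Proof.
move=> s_shift z_range; apply: Kequiv_postpend_hit; last by rewrite std_bump_cshift.
by apply: is_perm_postpend => //; apply: cshift_is_perm.
Qed.

Lemma Kequiv_prepend_postpend y z k : k \in m -> bump y k = z -> bump z k = y ->
  Kequiv m c.+1 (prepend y m) (postpend z m).
Proof.
move=> k_m yk_z zk_y; set b := index k m.
have b_lt : b < c by rewrite index_mem.
set t := drop b.+1 m ++ take b m.
have rot_m : rot b m = k :: t by rewrite /rot (drop_nth 0 b_lt) nth_index.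
have kt_shift : is_cshift m (k :: t) by exists b.
have k_t : k \notin t.
  by move: (rot_uniq b m); rewrite rot_m (perm_uniq m_perm) iota_uniq => /andP[].
have k_range : 0 < k <= c by rewrite -mem_m.
have y_range : 0 < y <= c.+1 by rewrite -zk_y /bump; case: leqP; lia.
have z_range : 0 < z <= c.+1 by rewrite -yk_z /bump; case: leqP; lia.
apply: (rst_trans _ _ _ (prepend y (rcons t k))).
  by apply/rst_sym/Kequiv_prepend_cshift; rewrite // -rot1_cons; apply: cshift_rot.
by rewrite (prepend_rcons_postpend k_t yk_z zk_y); apply: Kequiv_postpend_cshift.
Qed.

Lemma Kequiv_prepend_add2 y : 0 < y -> y.+2 <= c.+1 ->
  Kequiv m c.+1 (prepend y m) (prepend y.+2 m).
Proof.
move=> y_gt0 y_le; apply: (rst_trans _ _ _ (postpend y.+1 m)).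
  by apply: (Kequiv_prepend_postpend (k := y));
    rewrite ?mem_m ?bump_diag ?bump_succ //; lia.
by apply/rst_sym/(Kequiv_prepend_postpend (k := y.+1));
  rewrite ?mem_m ?bump_diag ?bump_succ //; lia.
Qed.

Lemma Kequiv_prepend_parity y : 0 < y <= c.+1 ->
  Kequiv m c.+1 (prepend y m) (prepend (2 - odd y) m).
Proof.
elim/ltn_ind: y => y IHy y_range; have [y_lt3 | y_ge3] := ltnP y 3.
  by case: y y_lt3 y_range {IHy} => [|[|[|y]]] // _ _; exact: rst_refl.
case: y => [|[|x]] // in IHy y_range y_ge3 *.
have odd_x2 : odd x.+2 = odd x by rewrite /= negbK.
have x_range : 0 < x <= c.+1 by lia.
rewrite odd_x2; apply: (rst_trans _ _ _ (prepend x m)); last by apply: IHy.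
by apply/rst_sym/Kequiv_prepend_add2; lia.
Qed.

Lemma Kequiv_postpend_prepend z : 0 < c -> 0 < z <= c.+1 ->
  exists2 y, 0 < y <= c.+1 & Kequiv m c.+1 (postpend z m) (prepend y m).
Proof.
case: z => [|[|k]] c_gt0 z_range //.
- exists 2; first lia.
  by apply/rst_sym/(Kequiv_prepend_postpend (k := 1));
    rewrite ?mem_m ?bump_diag ?bump_succ.
- exists k.+1; first lia.
  by apply/rst_sym/(Kequiv_prepend_postpend (k := k.+1));
    rewrite ?mem_m ?bump_diag ?bump_succ //; lia.
Qed.

End CyclicPart.

Theorem lemma2p5 (c : nat) (m : seq nat) :
  1 < c -> size m = c -> is_perm c m ->
  forall phi : seq nat, is_perm c.+1 phi -> nonavoider m phi ->
    Kequiv m c.+1 phi (prepend 1 m) \/ Kequiv m c.+1 phi (prepend 2 m).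
Proof.
move=> c_gt1 size_m; subst c => m_perm phi phi_perm phi_hit.
have phi_range x : x \in phi -> 0 < x <= (size m).+1.
  by rewrite (perm_mem phi_perm) mem_iota; lia.
suff [y y_range phi_y] : exists2 y, 0 < y <= (size m).+1 &
    Kequiv m (size m).+1 phi (prepend y m).
  have := rst_trans _ _ _ _ _ phi_y (Kequiv_prepend_parity m_perm y_range).
  by case: (odd y); [left | right].
have size_phi : size phi = (size m).+1 by rewrite (perm_size phi_perm) size_iota.
have [[y [u [phi_eq hit_u]]] | [u [z [phi_eq hit_u]]]] := nonavoider_cases size_phi phi_hit.
- exists y; first by apply: phi_range; rewrite phi_eq mem_head.
  by rewrite phi_eq; apply: Kequiv_prepend_hit; rewrite // -phi_eq.
- have [|y y_range z_y] := Kequiv_postpend_prepend m_perm (ltnW c_gt1) (phi_range z _).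
    by rewrite phi_eq mem_rcons mem_head.
  exists y => //; apply: (rst_trans _ _ _ _ _ _ z_y).
  by rewrite phi_eq; apply: Kequiv_postpend_hit; rewrite // -phi_eq.
Qed.
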